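(* Let $W_{10}^l,W_{20}^l$ ($l\in[L]$) have i.i.d. $\mathcal N(0,1)$ entries, and (on the event $\|W_{10}^l\|\le c_{10}\sqrt n$, $\|W_{20}^l\|\le c_{20}\sqrt m$ for all $l$, with $c_{10}=1+2\sqrt m/\sqrt n$, $c_{20}=3$) let $\mathbf W_1\in B(\mathbf W_{10},R_1)$, $\mathbf W_2\in B(\mathbf W_{20},R_2)$. Then for every $l\in[L]$: for LISTA, $\|\mathbf x^l\|\le c^l_{\mathrm{ISTA};\mathbf x}$; for ADMM-CSNet, $\|\mathbf z^l\|\le c^l_{\mathrm{ADMM};\mathbf z}$ and $\|\mathbf u^l\|\le c^l_{\mathrm{ADMM};\mathbf u}$, where $c^0_{\mathrm{ISTA};\mathbf x}=\sqrt m C_x$, $c^0_{\mathrm{ADMM};\mathbf z}=\sqrt m C_z$, $c^0_{\mathrm{ADMM};\mathbf u}=\sqrt m C_u$ and $$c^l_{\mathrm{ISTA};\mathbf x}=L_\sigma\Big(c_{10}+\tfrac{R_1}{\sqrt n}\Big)\sqrt nC_y+L_\sigma\Big(c_{20}+\tfrac{R_2}{\sqrt m}\Big)c^{l-1}_{\mathrm{ISTA};\mathbf x}+\sigma(0)=O(\sqrt m),$$ $$c^l_{\mathrm{ADMM};\mathbf z}=L_\sigma\Big(c_{10}+\tfrac{R_1}{\sqrt n}\Big)\sqrt nC_y+L_\sigma\Big(c_{20}+\tfrac{R_2}{\sqrt m}\Big)c^{l-1}_{\mathrm{ADMM};\mathbf z}+L_\sigma\Big(1+c_{20}+\tfrac{R_2}{\sqrt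 m}\Big)c^{l-1}_{\mathrm{ADMM};\mathbf u}+\sigma(0)=O(\sqrt m),$$ $$c^l_{\mathrm{ADMM};\mathbf u}=\Big(c_{10}+\tfrac{R_1}{\sqrt n}\Big)\sqrt nC_y+\Big(c_{20}+\tfrac{R_2}{\sqrt m}\Big)c^{l-1}_{\mathrm{ADMM};\mathbf z}+\Big(c_{20}+\tfrac{R_2}{\sqrt m}+1\Big)c^{l-1}_{\mathrm{ADMM};\mathbf u}+c^l_{\mathrm{ADMM};\mathbf z}=O(\sqrt m).$$
   Context: Fix $L,n,m\ge1$, $\lambda>0$ and $\sigma(x)=\log(1+e^{x-\lambda})-\log(1+e^{-x-\lambda})$ (componentwise), $L_\sigma$-Lipschitz. Input $\mathbf y\in\mathbb R^n$ with $|y_i|\le C_y$. Parameters $W_1^l\in\mathbb R^{m\times n}$, $W_2^l\in\mathbb R^{m\times m}$; $\mathbf W_1=(W_1^l)_{l}$, $\mathbf W_2=(W_2^l)_l$, initial values $\mathbf W_{10},\mathbf W_{20}$; $B(\mathbf W_{10},R_1)=\{\mathbf W_1:\|\mathbf W_1-\mathbf W_{10}\|_F\le R_1\}$ (Frobenius over all entries), similarly for $\mathbf W_2$. LISTA: $\mathbf x^0$ with $|x^0_i|\le C_x$, $\mathbf x^l=\sigma\big(\frac1{\sqrt n}W_1^l\mathbf y+\frac1{\sqrt m}W_2^l\mathbf x^{l-1}\big)$. ADMM-CSNet: $\mathbf z^0,\mathbf u^0$ with $|z^0_i|\le C_z$, $|u^0_i|\le C_u$; $\mathbf x^l=\frac1{\sqrt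 n}W_1^l\mathbf y+\frac1{\sqrt m}W_2^l(\mathbf z^{l-1}-\mathbf u^{l-1})$, $\mathbf z^l=\sigma(\mathbf x^l+\mathbf u^{l-1})$, $\mathbf u^l=\mathbf u^{l-1}+\mathbf x^l-\mathbf z^l$. $\|\cdot\|$ is the Euclidean norm; $O(\cdot)$ is with respect to $m$. *)

From HB Require Import structures.
From mathcomp Require Import all_boot all_order all_algebra.
From mathcomp Require Import all_classical all_reals all_analysis.
Set Implicit Arguments. Unset Strict Implicit. Unset Printing Implicit Defensive.
Import Order.TTheory GRing.Theory Num.Theory.
Local Open Scope ring_scope.

Section Defs.
Variable R : realType.

Definition sigma (lam x : R) : R :=
  ln (1 + expR (x - lam)) - ln (1 + expR (- x - lam)).

Definition sigv (lam : R) (k : nat) (v : 'cV[R]_k) : 'cV[R]_k :=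
  map_mx (sigma lam) v.

Definition vnorm (k : nat) (v : 'cV[R]_k) : R :=
  Num.sqrt (\sum_(i < k) v i 0 ^+ 2).

Definition rs (k : nat) : R := Num.sqrt (k%:R).

Definition opnorm_le (p q : nat) (W : 'M[R]_(p, q)) (K : R) : Prop :=
  forall v : 'cV[R]_q, vnorm (W *m v) <= K * vnorm v.

Definition frobL (p q : nat) (Ws : nat -> 'M[R]_(p, q)) (L : nat) : R :=
  Num.sqrt (\sum_(1 <= l < L.+1) \sum_(i < p) \sum_(j < q) Ws l i j ^+ 2).

Fixpoint lista (lam : R) (n m : nat) (y : 'cV[R]_n)
    (W1 : nat -> 'M[R]_(m, n)) (W2 : nat -> 'M[R]_(m, m)) (x0 : 'cV[R]_m)
    (l : nat) : 'cV[R]_m :=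
  match l with
  | 0 => x0
  | l'.+1 => sigv lam ((rs n)^-1 *: (W1 l'.+1 *m y)
                       + (rs m)^-1 *: (W2 l'.+1 *m lista lam y W1 W2 x0 l'))
  end.

Fixpoint admm (lam : R) (n m : nat) (y : 'cV[R]_n)
    (W1 : nat -> 'M[R]_(m, n)) (W2 : nat -> 'M[R]_(m, m)) (z0 u0 : 'cV[R]_m)
    (l : nat) : 'cV[R]_m * 'cV[R]_m :=
  match l with
  | 0 => (z0, u0)
  | l'.+1 =>
      let zu := admm lam y W1 W2 z0 u0 l' in
      let x := (rs n)^-1 *: (W1 l'.+1 *m y) + (rs m)^-1 *: (W2 l'.+1 *m (zu.1 - zu.2)) in
      let z := sigv lam (x + zu.2) in
      (z, zu.2 + x - z)
  end.

Definition c10 (n m : nat) : R := 1 + 2 * rs m / rs n.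
Definition c20 : R := 3.

Fixpoint c_ista (lam Lsig Cy Cx R1 R2 : R) (n m : nat) (l : nat) : R :=
  match l with
  | 0 => rs m * Cx
  | l'.+1 => Lsig * (c10 n m + R1 / rs n) * rs n * Cy
             + Lsig * (c20 + R2 / rs m) * c_ista lam Lsig Cy Cx R1 R2 n m l'
             + sigma lam 0
  end.

Fixpoint c_admm (lam Lsig Cy Cz Cu R1 R2 : R) (n m : nat) (l : nat) : R * R :=
  match l with
  | 0 => (rs m * Cz, rs m * Cu)
  | l'.+1 =>
      let c := c_admm lam Lsig Cy Cz Cu R1 R2 n m l' in
      let cz := Lsig * (c10 n m + R1 / rs n) * rs n * Cy
                + Lsig * (c20 + R2 / rs m) * c.1
                + Lsig * (1 + c20 + R2 / rs m) * c.2
                + sigma lam 0 in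
      (cz, (c10 n m + R1 / rs n) * rs n * Cy
           + (c20 + R2 / rs m) * c.1
           + (c20 + R2 / rs m + 1) * c.2
           + cz)
  end.

End Defs.

From HB Require Import structures.
From mathcomp Require Import all_boot all_order all_algebra.
From mathcomp Require Import all_classical all_reals all_analysis.
From mathcomp Require Import lra ring.
Import Order.TTheory GRing.Theory Num.Theory.
Set Implicit Arguments. Unset Strict Implicit.
Local Open Scope ring_scope.

(* Since [sigma] is odd, [sigma 0 = 0] and [||sigma v|| <= Lsig ||v||]; in particular the
   [sigma 0] terms of the constants vanish.  Each weight matrix lies within Frobenius
   distance [R] of an initial matrix of operator norm at most [c sqrt k], and the
   Frobenius norm dominates the operator norm, so [||W v|| / sqrt k <= (c + R / sqrt k) ||v||].
   With the triangle inequality, the norms of the iterates then obey exactly the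
   recursions defining the constants.  These recursions have coefficients bounded in
   [m] and input term [(c10 + R1 / sqrt n) sqrt n Cy = (sqrt n + 2 sqrt m + R1) Cy],
   so by induction on the layer every constant is [O(sqrt m)]. *)

Section Euclidean_norm.
Variable R : realType.

Lemma sumr_sqr_ge0 k (a : 'I_k -> R) : 0 <= \sum_i a i ^+ 2.
Proof. by apply: sumr_ge0 => i _; apply: sqr_ge0. Qed.

(* Lagrange's identity: twice the difference of the two sides is
   [\sum_(i, j) (a i * b j - a j * b i) ^+ 2]. *)
Lemma cauchy_schwarz k (a b : 'I_k -> R) :
  (\sum_i a i * b i) ^+ 2 <= (\sum_i a i ^+ 2) * (\sum_i b i ^+ 2).
Proof.
have lagrange : \sum_i \sum_j (a i * b j - a j * b i) ^+ 2 =
    2 * ((\sum_i a i ^+ 2) * (\sum_i b i ^+ 2) - (\sum_i a i * b i) ^+ 2).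
  have expand i j : (a i * b j - a j * b i) ^+ 2 =
      a i ^+ 2 * b j ^+ 2 + a j ^+ 2 * b i ^+ 2 - 2 * (a i * b i * (a j * b j)).
    by ring.
  have swap : \sum_i \sum_j a j ^+ 2 * b i ^+ 2 = \sum_i \sum_j a i ^+ 2 * b j ^+ 2.
    exact: exchange_big.
  have prod : (\sum_i a i ^+ 2) * (\sum_i b i ^+ 2) = \sum_i \sum_j a i ^+ 2 * b j ^+ 2.
    by rewrite mulr_suml; apply: eq_bigr => i _; rewrite mulr_sumr.
  have square : 2 * (\sum_i a i * b i) ^+ 2 =
      \sum_i \sum_j 2 * (a i * b i * (a j * b j)).
    by rewrite expr2 mulr_suml mulr_sumr; apply: eq_bigr => i _; rewrite !mulr_sumr.
  under eq_bigr do under eq_bigr do rewrite expand.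
  under eq_bigr do rewrite sumrB big_split /=.
  by rewrite sumrB big_split /= swap prod mulrBr square; ring.
have : 0 <= \sum_i \sum_j (a i * b j - a j * b i) ^+ 2.
  by apply: sumr_ge0 => i _; apply: sumr_sqr_ge0.
by rewrite lagrange pmulr_rge0 // subr_ge0.
Qed.

Lemma vnorm_ge0 k (v : 'cV[R]_k) : 0 <= vnorm v.
Proof. exact: sqrtr_ge0. Qed.

Lemma vnorm_sqr k (v : 'cV[R]_k) : vnorm v ^+ 2 = \sum_i v i 0 ^+ 2.
Proof. by rewrite sqr_sqrtr // sumr_sqr_ge0. Qed.

Lemma vnorm_le k (v : 'cV[R]_k) (c : R) :
  0 <= c -> \sum_i v i 0 ^+ 2 <= c ^+ 2 -> vnorm v <= c.
Proof. by move=> c_ge0 /ler_wsqrtr; rewrite sqrtr_sqr ger0_norm. Qed.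

Lemma dot_le_vnorm k (u v : 'cV[R]_k) :
  \sum_i u i 0 * v i 0 <= vnorm u * vnorm v.
Proof.
apply: le_trans (ler_norm _) _; rewrite -sqrtr_sqr -sqrtrM ?sumr_sqr_ge0 //.
exact/ler_wsqrtr/cauchy_schwarz.
Qed.

Lemma vnormD k (u v : 'cV[R]_k) : vnorm (u + v) <= vnorm u + vnorm v.
Proof.
apply: vnorm_le; first by rewrite addr_ge0 ?vnorm_ge0.
have -> : \sum_i (u + v) i 0 ^+ 2 =
    \sum_i u i 0 ^+ 2 + \sum_i v i 0 ^+ 2 + 2 * \sum_i u i 0 * v i 0.
  by rewrite mulr_sumr -!big_split /=; apply: eq_bigr => i _; rewrite mxE; ring.
by rewrite -!vnorm_sqr; have := dot_le_vnorm u v; lra.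
Qed.

Lemma vnormZ k (c : R) (v : 'cV[R]_k) : vnorm (c *: v) = `|c| * vnorm v.
Proof.
rewrite -sqrtr_sqr -sqrtrM ?sqr_ge0 // mulr_sumr.
by congr Num.sqrt; apply: eq_bigr => i _; rewrite mxE exprMn.
Qed.

Lemma vnormN k (v : 'cV[R]_k) : vnorm (- v) = vnorm v.
Proof. by rewrite -scaleN1r vnormZ normrN normr1 mul1r. Qed.

Lemma vnormB k (u v : 'cV[R]_k) : vnorm (u - v) <= vnorm u + vnorm v.
Proof. by rewrite -(vnormN v) vnormD. Qed.

Lemma vnorm_le_entrywise k (v : 'cV[R]_k) (c : R) :
  (forall i, `|v i 0| <= c) -> vnorm v <= rs R k * c.
Proof.
case: k v => [|k] v v_le; first by rewrite /vnorm /rs big_ord0 sqrtr0 mul0r.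
have c_ge0 : 0 <= c := le_trans (normr_ge0 _) (v_le ord0).
apply: vnorm_le; first by rewrite mulr_ge0 ?sqrtr_ge0.
apply: (@le_trans _ _ (\sum_(i < k.+1) c ^+ 2)).
  by apply: ler_sum => i _; rewrite -real_normK ?num_real // lerXn2r ?nnegrE.
by rewrite exprMn sqr_sqrtr // sumr_const card_ord mulr_natl.
Qed.

Lemma vnorm_map_mx_le k (f : R -> R) (c : R) (v : 'cV[R]_k) :
  0 <= c -> (forall a, `|f a| <= c * `|a|) -> vnorm (map_mx f v) <= c * vnorm v.
Proof.
move=> c_ge0 f_le; apply: vnorm_le; first by rewrite mulr_ge0 ?vnorm_ge0.
rewrite exprMn vnorm_sqr mulr_sumr; apply: ler_sum => i _.
rewrite mxE -exprMn -real_normK ?num_real // -[X in _ <= X]real_normK ?num_real //.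
by rewrite lerXn2r ?nnegrE // normrM (ger0_norm c_ge0).
Qed.

End Euclidean_norm.

Section Weight_matrices.
Variable R : realType.

Definition frob p q (A : 'M[R]_(p, q)) : R := Num.sqrt (\sum_i \sum_j A i j ^+ 2).

Lemma vnorm_mulmx_le_frob p q (A : 'M[R]_(p, q)) (v : 'cV[R]_q) :
  vnorm (A *m v) <= frob A * vnorm v.
Proof.
apply: vnorm_le; first by rewrite mulr_ge0 ?sqrtr_ge0 ?vnorm_ge0.
rewrite exprMn sqr_sqrtr; last by apply: sumr_ge0 => i _; apply: sumr_sqr_ge0.
rewrite vnorm_sqr mulr_suml; apply: ler_sum => i _; rewrite mxE.
exact: (cauchy_schwarz (fun j => A i j) (fun j => v j 0)).
Qed.

Lemma frob_le_frobL p q (Ws : nat -> 'M[R]_(p, q)) L l :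
  (1 <= l <= L)%N -> frob (Ws l) <= frobL Ws L.
Proof.
move=> lL; rewrite ler_wsqrtr // (bigD1_seq l) ?iota_uniq //=.
  by rewrite lerDl; do 2!(apply: sumr_ge0 => ? _); apply: sumr_sqr_ge0.
by rewrite mem_index_iota ltnS.
Qed.

Lemma opnorm_le_perturb p q (W W0 : 'M[R]_(p, q)) (c r : R) :
  opnorm_le W0 c -> frob (W - W0) <= r -> opnorm_le W (c + r).
Proof.
move=> W0_le frob_le v; rewrite -(subrK W0 W) mulmxDl addrC mulrDl.
apply: le_trans (vnormD _ _) (lerD (W0_le v) _).
exact: le_trans (vnorm_mulmx_le_frob _ _) (ler_wpM2r (vnorm_ge0 v) frob_le).
Qed.

Lemma opnorm_le_scale p q (W : 'M[R]_(p, q)) (c r s : R) (v : 'cV[R]_q) :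
  0 < s -> opnorm_le W (c * s + r) ->
  vnorm (s^-1 *: (W *m v)) <= (c + r / s) * vnorm v.
Proof.
move=> s_gt0 W_le; rewrite vnormZ gtr0_norm ?invr_gt0 //.
have -> : c + r / s = s^-1 * (c * s + r) by field; rewrite gt_eqF.
by rewrite -mulrA ler_pM2l ?invr_gt0.
Qed.

Lemma layer_le p q (Ws Ws0 : nat -> 'M[R]_(p, q)) L l (c r s : R) (v : 'cV[R]_q) :
  0 < s -> (1 <= l <= L)%N -> opnorm_le (Ws0 l) (c * s) ->
  frobL (fun l => Ws l - Ws0 l) L <= r ->
  vnorm (s^-1 *: (Ws l *m v)) <= (c + r / s) * vnorm v.
Proof.
move=> s_gt0 lL Ws0_le near; apply: opnorm_le_scale s_gt0 _.
exact: opnorm_le_perturb Ws0_le (le_trans (frob_le_frobL (fun l => Ws l - Ws0 l) lL) near).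
Qed.

End Weight_matrices.

Section Soft_threshold.
Variable R : realType.

Lemma sigma0 (lam : R) : sigma lam 0 = 0.
Proof. by rewrite /sigma oppr0 subrr. Qed.

Lemma lipschitz_ge0 (f : R -> R) (c : R) :
  (forall a b, `|f a - f b| <= c * `|a - b|) -> 0 <= c.
Proof.
by move=> f_lip; have := f_lip 1 0; rewrite subr0 normr1 mulr1; apply: le_trans.
Qed.

Lemma vnorm_sigv_le (lam c : R) k (v : 'cV[R]_k) :
  (forall a b, `|sigma lam a - sigma lam b| <= c * `|a - b|) ->
  vnorm (sigv lam v) <= c * vnorm v.
Proof.
move=> sigma_lip; apply: vnorm_map_mx_le; first exact: lipschitz_ge0 sigma_lip.
by move=> a; have := sigma_lip a 0; rewrite sigma0 !subr0.
Qed.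

End Soft_threshold.

Section Constants.
Variable R : realType.

Definition input_gain (n m : nat) (R1 : R) : R := c10 R n m + R1 / rs R n.
Definition state_gain (m : nat) (R2 : R) : R := c20 R + R2 / rs R m.

Variables (lam Lsig Cy Cx Cz Cu R1 R2 : R) (n m : nat).

Lemma c_ista_S l :
  c_ista lam Lsig Cy Cx R1 R2 n m l.+1 =
  Lsig * (input_gain n m R1 * (rs R n * Cy)
          + state_gain m R2 * c_ista lam Lsig Cy Cx R1 R2 n m l).
Proof. by rewrite /= sigma0 /input_gain /state_gain; ring. Qed.

Lemma c_admm_S l (c := c_admm lam Lsig Cy Cz Cu R1 R2 n m l)
    (cx := input_gain n m R1 * (rs R n * Cy) + state_gain m R2 * (c.1 + c.2)) :
  c_admm lam Lsig Cy Cz Cu R1 R2 n m l.+1 =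
  (Lsig * (cx + c.2), cx + c.2 + Lsig * (cx + c.2)).
Proof. by rewrite /= sigma0 /cx /c /input_gain /state_gain; congr pair; ring. Qed.

End Constants.

Section Unrolled_networks.
Variables (R : realType) (lam Lsig Cy Cx Cz Cu R1 R2 : R) (L n m : nat).
Variables (y : 'cV[R]_n) (x0 z0 u0 : 'cV[R]_m).
Variables (W1 : nat -> 'M[R]_(m, n)) (W2 : nat -> 'M[R]_(m, m)).
Hypothesis sigma_lip : forall a b, `|sigma lam a - sigma lam b| <= Lsig * `|a - b|.
Hypothesis input_le : forall l, (1 <= l <= L)%N ->
  vnorm ((rs R n)^-1 *: (W1 l *m y)) <= input_gain n m R1 * (rs R n * Cy).
Hypothesis state_le : forall l v, (1 <= l <= L)%N ->
  vnorm ((rs R m)^-1 *: (W2 l *m v)) <= state_gain m R2 * vnorm v.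
Hypothesis state_gain_ge0 : 0 <= state_gain m R2.

Lemma lista_le l : vnorm x0 <= rs R m * Cx -> (l <= L)%N ->
  vnorm (lista lam y W1 W2 x0 l) <= c_ista lam Lsig Cy Cx R1 R2 n m l.
Proof.
move=> x0_le; elim: l => [//|l IH] lL; rewrite c_ista_S /=.
have lL' : (1 <= l.+1 <= L)%N by [].
apply: le_trans (vnorm_sigv_le _ sigma_lip) _.
rewrite ler_wpM2l ?(lipschitz_ge0 sigma_lip) //.
apply: le_trans (vnormD _ _) (lerD (input_le lL') _).
exact: le_trans (state_le _ lL') (ler_wpM2l state_gain_ge0 (IH (ltnW lL))).
Qed.

Lemma admm_le l : vnorm z0 <= rs R m * Cz -> vnorm u0 <= rs R m * Cu -> (l <= L)%N ->
  vnorm (admm lam y W1 W2 z0 u0 l).1 <= (c_admm lam Lsig Cy Cz Cu R1 R2 n m l).1 /\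
  vnorm (admm lam y W1 W2 z0 u0 l).2 <= (c_admm lam Lsig Cy Cz Cu R1 R2 n m l).2.
Proof.
move=> z0_le u0_le; elim: l => [//|l IH] lL; rewrite c_admm_S /=.
have lL' : (1 <= l.+1 <= L)%N by [].
have [z_le u_le] := IH (ltnW lL).
case: (admm lam y W1 W2 z0 u0 l) z_le u_le => z u /= z_le u_le.
set cz := (c_admm lam Lsig Cy Cz Cu R1 R2 n m l).1 in z_le *.
set cu := (c_admm lam Lsig Cy Cz Cu R1 R2 n m l).2 in u_le *.
set x := (rs R n)^-1 *: _ + _.
set cx := input_gain _ _ _ * _ + _.
have x_le : vnorm x <= cx.
  apply: le_trans (vnormD _ _) (lerD (input_le lL') _).
  apply: le_trans (state_le _ lL') (ler_wpM2l state_gain_ge0 _).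
  exact: le_trans (vnormB z u) (lerD z_le u_le).
have z'_le : vnorm (sigv lam (x + u)) <= Lsig * (cx + cu).
  apply: le_trans (vnorm_sigv_le _ sigma_lip) _.
  rewrite ler_wpM2l ?(lipschitz_ge0 sigma_lip) //.
  exact: le_trans (vnormD _ _) (lerD x_le u_le).
split=> //; apply: le_trans (vnormB _ _) (lerD _ z'_le).
by rewrite addrC; apply: le_trans (vnormD _ _) (lerD x_le u_le).
Qed.

End Unrolled_networks.

Section Growth_in_width.
Variable R : realType.
Implicit Types (u v : nat -> R) (c : R).

Definition bounded_seq u := exists K, forall m, (0 < m)%N -> `|u m| <= K.
Definition sqrt_bounded u := exists K, forall m, (0 < m)%N -> `|u m| <= K * rs R m.

Lemma rs_gt0 m : (0 < m)%N -> 0 < rs R m.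
Proof. by move=> m_gt0; rewrite sqrtr_gt0 ltr0n. Qed.

Lemma rs_ge1 m : (0 < m)%N -> 1 <= rs R m.
Proof. by move=> m_gt0; rewrite -sqrtr1 ler_wsqrtr // ler1n. Qed.

Lemma bounded_cst c : bounded_seq (fun=> c).
Proof. by exists `|c|. Qed.

Lemma bounded_div_rs c : bounded_seq (fun m => c / rs R m).
Proof.
exists `|c| => m m_gt0; rewrite normrM normfV (gtr0_norm (rs_gt0 m_gt0)).
by rewrite ler_pdivrMr ?rs_gt0 // ler_peMr ?rs_ge1.
Qed.

Lemma boundedD u v : bounded_seq u -> bounded_seq v -> bounded_seq (fun m => u m + v m).
Proof.
move=> [Ku u_le] [Kv v_le]; exists (Ku + Kv) => m m_gt0.
exact: le_trans (ler_normD _ _) (lerD (u_le m m_gt0) (v_le m m_gt0)).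
Qed.

Lemma sqrt_bounded_rs c : sqrt_bounded (fun m => c * rs R m).
Proof. by exists `|c| => m _; rewrite normrM (ger0_norm (sqrtr_ge0 _)). Qed.

Lemma bounded_sqrt_bounded u : bounded_seq u -> sqrt_bounded u.
Proof.
move=> [K u_le]; exists K => m m_gt0; apply: le_trans (u_le m m_gt0) _.
by apply: ler_peMr (rs_ge1 m_gt0); apply: le_trans (u_le m m_gt0).
Qed.

Lemma sqrt_boundedD u v :
  sqrt_bounded u -> sqrt_bounded v -> sqrt_bounded (fun m => u m + v m).
Proof.
move=> [Ku u_le] [Kv v_le]; exists (Ku + Kv) => m m_gt0; rewrite mulrDl.
exact: le_trans (ler_normD _ _) (lerD (u_le m m_gt0) (v_le m m_gt0)).
Qed.

Lemma sqrt_boundedMl u v :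
  bounded_seq u -> sqrt_bounded v -> sqrt_bounded (fun m => u m * v m).
Proof.
move=> [Ku u_le] [Kv v_le]; exists (Ku * Kv) => m m_gt0; rewrite normrM -mulrA.
exact: ler_pM (u_le m m_gt0) (v_le m m_gt0).
Qed.

Lemma eq_sqrt_bounded u v : u =1 v -> sqrt_bounded u -> sqrt_bounded v.
Proof. by move=> uv [K u_le]; exists K => m; rewrite -uv; apply: u_le. Qed.

Lemma sqrt_bounded_common u v w :
  sqrt_bounded u -> sqrt_bounded v -> sqrt_bounded w ->
  exists K, forall m, (0 < m)%N ->
    `|u m| <= K * rs R m /\ `|v m| <= K * rs R m /\ `|w m| <= K * rs R m.
Proof.
move=> [Ku u_le] [Kv v_le] [Kw w_le].
exists (Num.max Ku (Num.max Kv Kw)) => m m_gt0.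
have scale_le K : K <= Num.max Ku (Num.max Kv Kw) ->
    K * rs R m <= Num.max Ku (Num.max Kv Kw) * rs R m.
  by move=> K_le; rewrite ler_wpM2r ?sqrtr_ge0.
split; [|split]; [apply: le_trans (u_le m m_gt0) _ | apply: le_trans (v_le m m_gt0) _ |
  apply: le_trans (w_le m m_gt0) _]; by apply: scale_le; rewrite !le_max lexx ?orbT.
Qed.

Lemma input_bound_sqrt_bounded n (R1 Cy : R) : (0 < n)%N ->
  sqrt_bounded (fun m => input_gain n m R1 * (rs R n * Cy)).
Proof.
move=> n_gt0; apply: (eq_sqrt_bounded _ (sqrt_boundedD
  (bounded_sqrt_bounded (bounded_cst (Cy * (rs R n + R1)))) (sqrt_bounded_rs (2 * Cy)))) => m.
by rewrite /input_gain /c10; field; rewrite gt_eqF ?rs_gt0.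
Qed.

Lemma state_gain_bounded (R2 : R) : bounded_seq (fun m => state_gain m R2).
Proof. exact: boundedD (bounded_cst _) (bounded_div_rs _). Qed.

Variables (lam Lsig Cy Cx Cz Cu R1 R2 : R) (n : nat).
Hypothesis n_gt0 : (0 < n)%N.

Lemma c_ista_sqrt_bounded l :
  sqrt_bounded (fun m => c_ista lam Lsig Cy Cx R1 R2 n m l).
Proof.
elim: l => [|l IH].
  by apply: (eq_sqrt_bounded _ (sqrt_bounded_rs Cx)) => m; rewrite mulrC.
apply: (eq_sqrt_bounded _ (sqrt_boundedMl (bounded_cst Lsig)
  (sqrt_boundedD (input_bound_sqrt_bounded R1 Cy n_gt0)
                 (sqrt_boundedMl (state_gain_bounded R2) IH)))) => m.
by rewrite c_ista_S.
Qed.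

Lemma c_admm_sqrt_bounded l :
  sqrt_bounded (fun m => (c_admm lam Lsig Cy Cz Cu R1 R2 n m l).1) /\
  sqrt_bounded (fun m => (c_admm lam Lsig Cy Cz Cu R1 R2 n m l).2).
Proof.
elim: l => [|l [cz_growth cu_growth]].
  by split; [apply: (eq_sqrt_bounded _ (sqrt_bounded_rs Cz)) |
             apply: (eq_sqrt_bounded _ (sqrt_bounded_rs Cu))] => m; rewrite /= mulrC.
have cx_growth := sqrt_boundedD (input_bound_sqrt_bounded R1 Cy n_gt0)
  (sqrt_boundedMl (state_gain_bounded R2) (sqrt_boundedD cz_growth cu_growth)).
have cz'_growth := sqrt_boundedMl (bounded_cst Lsig) (sqrt_boundedD cx_growth cu_growth).
split; [apply: (eq_sqrt_bounded _ cz'_growth) |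
        apply: (eq_sqrt_bounded _ (sqrt_boundedD (sqrt_boundedD cx_growth cu_growth) cz'_growth))].
all: by move=> m; rewrite c_admm_S.
Qed.

End Growth_in_width.

Theorem lemma4 (R : realType) (L n : nat) (lam Lsig Cy Cx Cz Cu R1 R2 : R) :
  (1 <= L)%N -> (1 <= n)%N -> 0 < lam ->
  (forall a b : R, `|sigma lam a - sigma lam b| <= Lsig * `|a - b|) ->
  (* Part 1: deterministic bounds on the event of the operator-norm bounds *)
  (forall (m : nat), (1 <= m)%N ->
   forall (y : 'cV[R]_n) (x0 z0 u0 : 'cV[R]_m)
          (W10 W1 : nat -> 'M[R]_(m, n)) (W20 W2 : nat -> 'M[R]_(m, m)),
   (forall i, `|y i 0| <= Cy) ->
   (forall i, `|x0 i 0| <= Cx) ->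
   (forall i, `|z0 i 0| <= Cz) ->
   (forall i, `|u0 i 0| <= Cu) ->
   (forall l, (1 <= l <= L)%N -> opnorm_le (W10 l) (c10 R n m * rs R n)) ->
   (forall l, (1 <= l <= L)%N -> opnorm_le (W20 l) (c20 R * rs R m)) ->
   frobL (fun l => W1 l - W10 l) L <= R1 ->
   frobL (fun l => W2 l - W20 l) L <= R2 ->
   forall l, (1 <= l <= L)%N ->
     vnorm (lista lam y W1 W2 x0 l) <= c_ista lam Lsig Cy Cx R1 R2 n m l /\
     vnorm (admm lam y W1 W2 z0 u0 l).1 <= (c_admm lam Lsig Cy Cz Cu R1 R2 n m l).1 /\
     vnorm (admm lam y W1 W2 z0 u0 l).2 <= (c_admm lam Lsig Cy Cz Cu R1 R2 n m l).2)
  /\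
  (* Part 2: the constants are O(sqrt m) as m -> oo, all other parameters fixed *)
  (forall l, (1 <= l <= L)%N ->
   exists K : R, exists M : nat, forall m : nat, (M <= m)%N ->
     `|c_ista lam Lsig Cy Cx R1 R2 n m l| <= K * rs R m /\
     `|(c_admm lam Lsig Cy Cz Cu R1 R2 n m l).1| <= K * rs R m /\
     `|(c_admm lam Lsig Cy Cz Cu R1 R2 n m l).2| <= K * rs R m).
Proof.
move=> _ n_gt0 _ sigma_lip; split=> [m m_gt0 y x0 z0 u0 W10 W1 W20 W2 y_le x0_le z0_le u0_le
    W10_le W20_le W1_near W2_near l /andP[_ lL] | l _].
  have input_le l' : (1 <= l' <= L)%N ->
      vnorm ((rs R n)^-1 *: (W1 l' *m y)) <= input_gain n m R1 * (rs R n * Cy).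
    move=> l'L; apply: le_trans (layer_le y (rs_gt0 R n_gt0) l'L (W10_le l' l'L) W1_near) _.
    rewrite ler_wpM2l ?vnorm_le_entrywise // /input_gain /c10.
    by rewrite !addr_ge0 ?divr_ge0 ?mulr_ge0 ?sqrtr_ge0 ?(le_trans (sqrtr_ge0 _) W1_near).
  have state_le l' v : (1 <= l' <= L)%N ->
      vnorm ((rs R m)^-1 *: (W2 l' *m v)) <= state_gain m R2 * vnorm v.
    by move=> l'L; apply: layer_le (rs_gt0 R m_gt0) l'L (W20_le l' l'L) W2_near.
  have state_gain_ge0 : 0 <= state_gain m R2.
    by rewrite addr_ge0 ?divr_ge0 ?sqrtr_ge0 ?(le_trans (sqrtr_ge0 _) W2_near).
  split; first exact: (lista_le sigma_lip input_le state_le state_gain_ge0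
    (vnorm_le_entrywise x0_le) lL).
  exact: (admm_le sigma_lip input_le state_le state_gain_ge0
    (vnorm_le_entrywise z0_le) (vnorm_le_entrywise u0_le) lL).
have [cz_growth cu_growth] := c_admm_sqrt_bounded lam Lsig Cy Cz Cu R1 R2 n_gt0 l.
have [K K_le] := sqrt_bounded_common
  (c_ista_sqrt_bounded lam Lsig Cy Cx R1 R2 n_gt0 l) cz_growth cu_growth.
by exists K, 1%N.
Qed.
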